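(* Let $p,q$ be distinct positive integers and $n\ge1$. For every nonempty finite sequence $s$ of elements of $\{p,q\}$, the map $\{p,q\}^n\to\{p,q\}^n$, $x\mapsto A^{p,q}_n(x,s)$, is a bijection (i.e. $A^{p,q}_n$ is a permutation automaton).
   Context: Let $p,q$ be distinct positive integers. Define $\mathrm{Opp}(p)=q$, $\mathrm{Opp}(q)=p$. For $x\in\{p,q\}$ and a finite sequence $s=(s_1,\dots,s_m)$ of positive integers, $RLD^{p,q}(x,s)$ is the sequence over $\{p,q\}$ consisting of $s_1$ copies of $x$, then $s_2$ copies of $\mathrm{Opp}(x)$, then $s_3$ copies of $x$, and so on alternately. For $n\ge1$ and $x=(x_1,\dots,x_n)\in\{p,q\}^n$: $RLD^{p,q}_1(x_1,s)=RLD^{p,q}(x_1,s)$ and $RLD^{p,q}_n(x_{1:n},s)=RLD^{p,q}(x_n, RLD^{p,q}_{n-1}(x_{1:n-1},s))$. For a nonempty sequence $t$ over $\{p,q\}$, $\mathrm{OppEnd}(t)=\mathrm{Opp}(\text{last entry of } t)$. The automaton $A^{p,q}_n$ has state set $\{p,q\}^n$; for a state $x$ and a nonempty finite sequence $s$ over $\{p,q\}$, $A^{p,q}_n(x,s)$ is the state whose $i$-th coordinate is $\mathrm{OppEnd}(RLD^{p,q}_i(x_{1:i},s))$, $i=1,\dots,n$. *)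

From mathcomp Require Import all_boot.
Set Implicit Arguments. Unset Strict Implicit. Unset Printing Implicit Defensive.

Definition Opp (p q x : nat) : nat := if x == p then q else p.

Fixpoint RLD (p q x : nat) (s : seq nat) : seq nat :=
  match s with
  | [::] => [::]
  | s1 :: t => nseq s1 x ++ RLD p q (Opp p q x) t
  end.

Definition RLDn (p q : nat) (xs : seq nat) (s : seq nat) : seq nat :=
  foldl (fun acc x => RLD p q x acc) s xs.

Definition OppEnd (p q : nat) (t : seq nat) : nat := Opp p q (last 0 t).

(* A^{p,q}_n(x, s): i-th coordinate is OppEnd(RLD_i(x_{1:i}, s)), i = 1..n. *)
Definition Aut (p q n : nat) (x s : seq nat) : seq nat :=
  mkseq (fun i => OppEnd p q (RLDn p q (take i.+1 x) s)) n.

Definition inPQ (p q : nat) (y : nat) : bool := (y == p) || (y == q).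
Definition is_state (p q n : nat) (x : seq nat) : bool :=
  (size x == n) && all (inPQ p q) x.

From mathcomp Require Import all_boot.

(* The last letter of RLD(a, t) is a or Opp a according to the parity of |t|,
   so the first coordinate of A_n(x, s) is x_1 or Opp x_1, while the remaining
   coordinates are A_{n-1}(x_{2:n}, RLD(x_1, s)).  The map x |-> A_n(x, s) is
   therefore triangular: an involution or the identity on the first coordinate,
   and, for each fixed x_1, a bijection of {p,q}^{n-1} by induction on n, since
   RLD(x_1, s) is again a nonempty sequence over {p,q}. *)

Section PermutationAutomaton.

Variables p q : nat.
Hypotheses (p_gt0 : 0 < p) (q_gt0 : 0 < q) (p_neq_q : p != q).

Lemma inPQ_Opp a : inPQ p q (Opp p q a).
Proof. by rewrite /Opp /inPQ; case: (a == p); rewrite eqxx ?orbT. Qed.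

Lemma OppK a : inPQ p q a -> Opp p q (Opp p q a) = a.
Proof.
have q_neq_p : (q == p) = false by rewrite eq_sym (negbTE p_neq_q).
by rewrite /Opp /inPQ; case/orP=> /eqP->; rewrite ?eqxx ?q_neq_p ?eqxx.
Qed.

Lemma inPQ_gt0 {a} : inPQ p q a -> 0 < a.
Proof. by case/orP=> /eqP->. Qed.

Lemma all_inPQ_RLD {a t} :
  inPQ p q a -> all (inPQ p q) t -> all (inPQ p q) (RLD p q a t).
Proof.
elim: t a => [|s1 t IHt] a //= aPQ /andP[_ tPQ].
by rewrite all_cat all_nseq aPQ orbT IHt ?inPQ_Opp.
Qed.

(* Each run has positive length because p and q are positive. *)
Lemma RLD_neq_nil a {t} : t != [::] -> all (inPQ p q) t -> RLD p q a t != [::].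
Proof. by case: t => [|s1 t] //= _ /andP[/inPQ_gt0]; case: s1. Qed.

Lemma last_RLD d a t : inPQ p q a -> t != [::] -> all (inPQ p q) t ->
  last d (RLD p q a t) = if odd (size t) then a else Opp p q a.
Proof.
elim: t a d => [|s1 t IHt] a d //= aPQ _ /andP[s1PQ tPQ].
rewrite last_cat; case: t IHt tPQ => [|s2 t] IHt tPQ /=.
  by move: (inPQ_gt0 s1PQ); case: s1 {s1PQ} => //= s1 _; elim: s1.
by rewrite IHt ?inPQ_Opp //=; case: (odd (size t)); rewrite ?OppK.
Qed.

Lemma OppEnd_RLD a t : inPQ p q a -> t != [::] -> all (inPQ p q) t ->
  OppEnd p q (RLD p q a t) = if odd (size t) then Opp p q a else a.
Proof. by move=> aPQ *; rewrite /OppEnd last_RLD //; case: ifP; rewrite ?OppK. Qed.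

Lemma Aut_cons n a x s :
  Aut p q n.+1 (a :: x) s = OppEnd p q (RLD p q a s) :: Aut p q n x (RLD p q a s).
Proof.
rewrite /Aut /mkseq /= -[in iota 1 n](addn0 1) iotaDl -map_comp.
by case: x.
Qed.

Lemma is_state_cons n a x :
  is_state p q n.+1 (a :: x) = inPQ p q a && is_state p q n x.
Proof. by rewrite /is_state /= eqSS andbCA. Qed.

Lemma is_state0 x : is_state p q 0 x -> x = [::].
Proof. by case: x. Qed.

Lemma is_state_Aut n x s : s != [::] -> all (inPQ p q) s ->
  is_state p q n x -> is_state p q n (Aut p q n x s).
Proof.
elim: n x s => [|n IHn] x s sN sPQ; first by move/is_state0->.
case: x => [|a x] //; rewrite is_state_cons => /andP[aPQ xS].
by rewrite Aut_cons is_state_cons inPQ_Opp IHn ?RLD_neq_nil ?all_inPQ_RLD.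
Qed.

Lemma Aut_inj n s : s != [::] -> all (inPQ p q) s ->
  {in is_state p q n &, injective (fun x => Aut p q n x s)}.
Proof.
elim: n s => [|n IHn] s sN sPQ x y; first by move=> /is_state0-> /is_state0->.
case: x => [|a x] //; case: y => [|b y] //.
rewrite -!topredE /= !is_state_cons => /andP[aPQ xS] /andP[bPQ yS].
rewrite !Aut_cons !OppEnd_RLD // => -[head_eq tail_eq].
have a_eq_b : a = b.
  by case: ifP head_eq => // _ /(congr1 (Opp p q)); rewrite !OppK.
subst b; congr (a :: _).
by apply: (IHn (RLD p q a s)); rewrite ?RLD_neq_nil ?all_inPQ_RLD.
Qed.

Lemma Aut_surj n s y : s != [::] -> all (inPQ p q) s ->
  is_state p q n y -> exists2 x, is_state p q n x & Aut p q n x s = y.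
Proof.
elim: n s y => [|n IHn] s y sN sPQ; first by move/is_state0->; exists [::].
case: y => [|c y] //; rewrite is_state_cons => /andP[cPQ yS].
pose a := if odd (size s) then Opp p q c else c.
have aPQ : inPQ p q a by rewrite /a; case: ifP; rewrite ?inPQ_Opp.
have [x xS <-] := IHn (RLD p q a s) y (RLD_neq_nil a sN sPQ) (all_inPQ_RLD aPQ sPQ) yS.
exists (a :: x); first by rewrite is_state_cons aPQ.
by rewrite Aut_cons OppEnd_RLD // /a; case: (odd (size s)); rewrite ?OppK.
Qed.

End PermutationAutomaton.

Theorem lemma1 (p q n : nat) (s : seq nat) :
  0 < p -> 0 < q -> p != q -> 1 <= n ->
  s != [::] -> all (inPQ p q) s ->
  [/\ (forall x, is_state p q n x -> is_state p q n (Aut p q n x s)),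
      {in is_state p q n &, injective (fun x => Aut p q n x s)} &
      (forall y, is_state p q n y ->
         exists2 x, is_state p q n x & Aut p q n x s = y)].
Proof.
move=> p_gt0 q_gt0 p_neq_q _ sN sPQ; split.
- by move=> x; apply: is_state_Aut.
- exact: Aut_inj.
- by move=> y; apply: Aut_surj.
Qed.
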